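(* Let $A=\mathbb{Q}[X_k:k\in\mathbb{N}]$ be the polynomial ring over $\mathbb{Q}$ in countably infinitely many variables. Then $A$ is finitely Jacobson but not Jacobson.
   Context: All rings are commutative with identity. The setting is constructive mathematics: no law of excluded middle and no Zorn's lemma. For a ring $A$ and a subset $U\subseteq A$, $\langle U\rangle_A$ denotes the ideal generated by $U$. Define $\mathrm{Nil}_A U:=\{a\in A:\exists n\ge 0,\ a^n\in\langle U\rangle_A\}$ and $\mathrm{Jac}_A U:=\{a\in A:\forall b\in A,\ 1\in\langle U\cup\{1-ab\}\rangle_A\}$. A ring $A$ is called Jacobson if every ideal $I$ of $A$ satisfies $\mathrm{Jac}_A I\subseteq \mathrm{Nil}_A I$. It is called finitely Jacobson if this inclusion holds for every finitely generated ideal $I$ of $A$. ''Not Jacobson'' means that there is an ideal $I$ of $A$ and an element of $\mathrm{Jac}_A I$ not in $\mathrm{Nil}_A I$. *)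

From HB Require Import structures.
From mathcomp Require Import all_boot all_order all_algebra.
From mathcomp Require Import finmap.
From mathcomp.multinomials Require Import monalg.
Set Implicit Arguments. Unset Strict Implicit. Unset Printing Implicit Defensive.
Import GRing.Theory.
Local Open Scope ring_scope.

Section Jacobson.
Variable R : comNzRingType.

Definition is_ideal (I : R -> Prop) : Prop :=
  [/\ I 0, (forall x y, I x -> I y -> I (x + y)) & (forall r x, I x -> I (r * x))].

Definition ideal_gen (U : R -> Prop) (x : R) : Prop :=
  exists s : seq (R * R), (forall p, p \in s -> U p.2) /\
                           x = \sum_(p <- s) p.1 * p.2.

Definition Nil (U : R -> Prop) (a : R) : Prop :=
  exists n : nat, ideal_gen U (a ^+ n).

Definition Jac (U : R -> Prop) (a : R) : Prop :=
  forall b : R, ideal_gen (fun x => U x \/ x = 1 - a * b) 1.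

Definition finitely_generated (I : R -> Prop) : Prop :=
  exists s : seq R, forall x, I x <-> ideal_gen (fun y => y \in s) x.

Definition Jacobson : Prop :=
  forall I : R -> Prop, is_ideal I -> forall a, Jac I a -> Nil I a.

Definition finitely_Jacobson : Prop :=
  forall I : R -> Prop, is_ideal I -> finitely_generated I ->
    forall a, Jac I a -> Nil I a.

(* "not Jacobson" in the positive sense of the paper *)
Definition not_Jacobson : Prop :=
  exists I : R -> Prop, is_ideal I /\ exists a, Jac I a /\ ~ Nil I a.

End Jacobson.

(* Q[X_k : k in N]: the monoid algebra of commutative monomials over nat,
   with coefficients in rat; X_k is << ucm k >>. *)
Definition QX : comNzRingType := {malg rat[{cmonom nat}]}.

(* Finitely Jacobson: let I = <s> be finitely generated and a in Jac I.  Pick a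
   variable X_N occurring neither in a nor in s, so that 1 = x + r (1 - a X_N)
   with x in I.  Substituting a new variable T for X_N gives an identity in A[T]
   in which only r involves T.  The A-linear map Q |-> sum_(j <= D) a^(D-j) Q_j
   ("put T := 1/a and clear denominators") sends 1 to a^D and kills P (1 - a T)
   whenever deg P < D, so it turns the identity into a^D in I.

   Not Jacobson: sending X_0 to X and the remaining variables onto the inverses
   1/w of the polynomials with w(0) <> 0 maps A onto the local ring Q[X]_(X)
   inside Q(X).  Modulo the kernel I, every 1 - X_0 b becomes a unit of that
   local ring, so X_0 is in Jac I, but no power of X_0 lies in I. *)

From HB Require Import structures.
From mathcomp Require Import all_boot all_order all_algebra finmap.
From mathcomp.multinomials Require Import monalg.
From mathcomp Require Import fraction.
Set Implicit Arguments. Unset Strict Implicit. Unset Printing Implicit Defensive.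
Import GRing.Theory.
Local Open Scope ring_scope.

Section MonomialEvaluation.
Variables (I : choiceType) (S : comNzRingType).
Implicit Types (g : I -> S) (m : cmonom I).

Definition cmonom_eval g m : S := \prod_(i <- finsupp m) g i ^+ m i.

Lemma cmonom_evalEw g m (d : {fset I}) : (finsupp m `<=` d)%fset ->
  cmonom_eval g m = \prod_(i <- d) g i ^+ m i.
Proof.
move=> le; apply: big_fset_incl => // i _.
by rewrite -cmE_eq0 => /eqP ->; rewrite expr0.
Qed.

Lemma cmonom_eval_is_mmorphism g : mmorphism (cmonom_eval g).
Proof.
split=> [m1 m2|]; last by rewrite /cmonom_eval mdom1 big_seq_fset0.
rewrite !(@cmonom_evalEw _ _ (finsupp m1 `|` finsupp m2)%fset) ?fsubsetUl ?fsubsetUr //;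
  last by rewrite mdomD.
by rewrite -big_split; apply: eq_bigr => i _; rewrite cmM exprD.
Qed.

HB.instance Definition _ g :=
  isMultiplicative.Build _ _ (cmonom_eval g) (cmonom_eval_is_mmorphism g).

Lemma cmonom_evalU g i : cmonom_eval g (ucm i) = g i.
Proof. by rewrite /cmonom_eval mdomU big_seq_fset1 cmUU expr1. Qed.

Lemma eq_cmonom_eval g g' m : {in finsupp m, g =1 g'} ->
  cmonom_eval g m = cmonom_eval g' m.
Proof. by move=> eq_g; apply: eq_big_seq => i /eq_g ->. Qed.

End MonomialEvaluation.

Lemma cmonom_eval_comp (I : choiceType) (S T : comNzRingType)
    (f : {rmorphism S -> T}) (g : I -> S) (m : cmonom I) :
  cmonom_eval (f \o g) m = f (cmonom_eval g m).
Proof. by rewrite rmorph_prod; apply: eq_bigr => i _; rewrite rmorphXn. Qed.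

Lemma monalgUM (K : monomType) (R : nzRingType) (c1 c2 : R) (m1 m2 : K) :
  << c1 *g m1 >> * << c2 *g m2 >> = << c1 * c2 *g mmul m1 m2 >> :> {malg R[K]}.
Proof. by rewrite malgM_def fgmulUU. Qed.

Lemma cmonom_eval_monalgU (I : choiceType) (R : comNzRingType) (m : cmonom I) :
  cmonom_eval (fun i => << ucm i >> : {malg R[cmonom I]}) m = << m >>.
Proof.
elim: {m}(mdeg m) {-2}m (erefl (mdeg m)) => [|d IH] m dm.
  by rewrite (mdeg_eq0I dm) mmorph1.
have [i im] : exists i, i \in finsupp m.
  have [E|[j jm]] := fset_0Vmem (finsupp m); last by exists j.
  by move: dm; rewrite mdegE E big_seq_fset0.
have Em : m = mmul (ucm i) (divcm m (ucm i)).
  apply/eqP/cmP => j; rewrite cmM divcmE ucmE.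
  by case: eqP => [<-|_]; rewrite ?add0n ?subn0 // subnKC // lt0n cmE_neq0.
rewrite Em mmorphM /= cmonom_evalU IH ?monalgUM ?mulr1 //.
by move: dm; rewrite {1}Em mdegM mdegU add1n => -[].
Qed.

Section PolynomialEvaluation.
Variables (I : choiceType) (R S : comNzRingType).
Implicit Types (c : {rmorphism R -> S}) (g : I -> S) (x : {malg R[cmonom I]}).

Definition peval c g : {malg R[cmonom I]} -> S := mmap c (cmonom_eval g).

HB.instance Definition _ c g := GRing.RMorphism.on (peval c g).

Lemma pevalU c g i : peval c g << ucm i >> = g i.
Proof.
rewrite /peval mmapU -[RHS]mul1r -(cmonom_evalU g i); congr (_ * _).
exact: rmorph1.
Qed.

Lemma pevalC c g r : peval c g r%:MP = c r.
Proof. exact: mmapC. Qed.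

Lemma eq_peval c g g' x :
    (forall m, m \in msupp x -> {in finsupp m, g =1 g'}) ->
  peval c g x = peval c g' x.
Proof.
by move=> eq_g; rewrite /peval !mmapE; apply: eq_big_seq => m /eq_g /eq_cmonom_eval ->.
Qed.

End PolynomialEvaluation.

Lemma peval_comp (I : choiceType) (R S T : comNzRingType) (f : {rmorphism S -> T})
    (c : {rmorphism R -> S}) (g : I -> S) (x : {malg R[cmonom I]}) :
  peval (f \o c) (f \o g) x = f (peval c g x).
Proof.
rewrite /peval !mmapE rmorph_sum; apply: eq_bigr => m _.
by rewrite rmorphM cmonom_eval_comp.
Qed.

Lemma peval_monalgU (I : choiceType) (R : comNzRingType) (x : {malg R[cmonom I]}) :
  peval malgC (fun i => << ucm i >>) x = x.
Proof.
rewrite /peval mmapE [RHS]monalgE; apply: eq_bigr => m _.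
by rewrite cmonom_eval_monalgU monalgUM mulr1 mul1m.
Qed.

Section Ideals.
Variable R : comNzRingType.
Implicit Types (I U : R -> Prop) (a u y : R).

Lemma ideal_gen_mem U y : U y -> ideal_gen U y.
Proof.
by move=> Uy; exists [:: (1, y)]; split=> [p /[!inE] /eqP -> //|]; rewrite big_seq1 mul1r.
Qed.

Lemma ideal_gen_ideal I y : is_ideal I -> ideal_gen I y -> I y.
Proof.
move=> [I0 ID IM] [s [sI ->]]; elim: s sI => [|p s IH] sI; first by rewrite big_nil.
rewrite big_cons; apply: ID; first by apply/IM/sI/mem_head.
by apply: IH => q qs; apply/sI; rewrite inE qs orbT.
Qed.

Lemma ideal_gen_adjoin I u y : is_ideal I ->
  ideal_gen (fun x => I x \/ x = u) y -> exists c, I (y - c * u).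
Proof.
move=> [I0 ID IM] [s [sU ->]]; elim: s sU => [|p s IH] sU.
  by exists 0; rewrite big_nil mul0r subr0.
have [q qs|c Ic] := IH; first by apply: sU; rewrite inE qs orbT.
rewrite big_cons; case: (sU p (mem_head _ _)) => [Ip|->].
  by exists c; rewrite -addrA; apply/ID/Ic/IM.
by exists (p.1 + c); rewrite mulrDl opprD addrACA subrr add0r.
Qed.

Lemma NilP I a : is_ideal I -> Nil I a <-> exists n, I (a ^+ n).
Proof.
by move=> idI; split=> -[n]; exists n; [exact: ideal_gen_ideal | exact: ideal_gen_mem].
Qed.

Lemma JacP I a : is_ideal I ->
  Jac I a <-> forall b, exists c, I (1 - c * (1 - a * b)).
Proof.
move=> idI; split=> Ja b; first exact: ideal_gen_adjoin (Ja b).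
have [c Ic] := Ja b.
exists [:: (1, 1 - c * (1 - a * b)); (c, 1 - a * b)]; split.
  by move=> p /[!inE] /orP[] /eqP -> /=; [left | right].
by rewrite !big_cons big_nil addr0 mul1r subrK.
Qed.

Lemma is_ideal_kernel (S : nzRingType) (f : {rmorphism R -> S}) :
  is_ideal (fun x => f x = 0).
Proof.
split=> [|x y fx fy|r x fx]; first exact: rmorph0.
  by rewrite rmorphD fx fy addr0.
by rewrite rmorphM fx mulr0.
Qed.

End Ideals.

Section HomogeneousEvaluation.
Variable R : comNzRingType.
Implicit Types (a c : R) (P Q : {poly R}).

Definition homog_eval a D Q : R := \sum_(j < D.+1) a ^+ (D - j) * Q`_j.

Lemma homog_eval_is_additive a D : additive (homog_eval a D).
Proof.
by move=> P Q; rewrite /homog_eval -sumrB; apply: eq_bigr => j _; rewrite coefB mulrBr.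
Qed.

HB.instance Definition _ a D :=
  GRing.isAdditive.Build {poly R} R (homog_eval a D) (homog_eval_is_additive a D).

Lemma homog_evalMC a D Q c : homog_eval a D (Q * c%:P) = homog_eval a D Q * c.
Proof. by rewrite /homog_eval mulr_suml; apply: eq_bigr => j _; rewrite coefMC mulrA. Qed.

Lemma homog_eval1 a D : homog_eval a D 1 = a ^+ D.
Proof.
rewrite /homog_eval big_ord_recl coef1 mulr1 subn0 big1 ?addr0 // => j _.
by rewrite coef1 mulr0.
Qed.

Lemma homog_eval_mul_1subX a D P : (size P <= D)%N ->
  homog_eval a D (P * (1 - a%:P * 'X)) = 0.
Proof.
move=> sP; rewrite /homog_eval.
have E j : (P * (1 - a%:P * 'X))`_j = P`_j - a * (if j == 0%N then 0 else P`_j.-1).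
  by rewrite mulrBr mulr1 coefB mulrA [P * _]mulrC -mulrA coefCM coefMX.
under eq_bigr => j _ do rewrite E mulrBr.
rewrite sumrB big_ord_recr /= (nth_default 0 sP) mulr0 addr0.
rewrite big_ord_recl mulr0 mulr0 add0r.
under [X in _ - X]eq_bigr => j _ do rewrite mulrA -exprSr subnSK //.
by rewrite subrr.
Qed.

End HomogeneousEvaluation.

Lemma finitely_Jacobson_of_fresh_subst (R : comNzRingType)
    (subst : nat -> {rmorphism R -> {poly R}}) (X : nat -> R) (fresh : seq R -> nat) :
  (forall N, subst N (X N) = 'X) ->
  (forall s x, x \in s -> subst (fresh s) x = x%:P) ->
  finitely_Jacobson R.
Proof.
move=> substX substC I idI [s Is] a /(JacP _ idI) Ja.
pose N := fresh (a :: s); pose ev := subst N.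
have ev_const x : x \in a :: s -> ev x = x%:P by apply: substC.
have [r /Is [l [ls El]]] := Ja (X N).
pose D := size (ev r).
apply/(NilP _ idI); exists D; apply/Is.
exists [seq (homog_eval a D (ev q.1), q.2) | q <- l]; split.
  by move=> _ /mapP[q ql ->]; exact: (ls q ql).
have ev_El : 1 - ev r * (1 - a%:P * 'X) = \sum_(q <- l) ev q.1 * q.2%:P.
  have := congr1 ev El.
  rewrite !(rmorphB, rmorphM, rmorph1) substX (ev_const a) ?mem_head //.
  rewrite rmorph_sum => ->; apply: eq_big_seq => q ql.
  by rewrite rmorphM (ev_const q.2) // inE ls ?orbT.
have := congr1 (homog_eval a D) ev_El.
rewrite raddfB /= homog_eval1 homog_eval_mul_1subX // subr0 raddf_sum big_map => ->.
by apply: eq_bigr => q _; rewrite /= homog_evalMC.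
Qed.

Section FreshVariable.
Variable R : comNzRingType.
Local Notation A := {malg R[cmonom nat]}.
Implicit Types (x : A) (s : seq A).

Definition polyC_malgC : {rmorphism R -> {poly A}} := polyC \o malgC.

Definition subst_var (N : nat) : A -> {poly A} :=
  @peval nat R {poly A} polyC_malgC (fun i => if i == N then 'X else (<< ucm i >>)%:P).

HB.instance Definition _ N := GRing.RMorphism.on (subst_var N).

Lemma subst_varU N : subst_var N << ucm N >> = 'X.
Proof. by rewrite /subst_var pevalU eqxx. Qed.

Lemma subst_var_fresh N x :
  (forall m, m \in msupp x -> N \notin finsupp m) -> subst_var N x = x%:P.
Proof.
move=> xN; rewrite -[in RHS](peval_monalgU x) -peval_comp.
apply: eq_peval => m /xN Nm i im /=; case: eqP => // iN.
by move: Nm; rewrite -iN im.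
Qed.

Definition fresh_var s : nat :=
  \max_(x <- s) \max_(m <- msupp x) \max_(i <- finsupp m) i.+1.

Lemma fresh_var_notin s x m :
  x \in s -> m \in msupp x -> fresh_var s \notin finsupp m.
Proof.
move=> xs mx; apply/negP => Nm.
have le_i := @leq_bigmax_seq _ (enum_fset (finsupp m)) xpredT succn _ Nm isT.
have le_m := @leq_bigmax_seq _ (enum_fset (msupp x)) xpredT
  (fun m => \max_(i <- finsupp m) i.+1) _ mx isT.
have le_x := @leq_bigmax_seq _ s xpredT
  (fun x => \max_(m <- msupp x) \max_(i <- finsupp m) i.+1) _ xs isT.
by have := leq_trans le_i (leq_trans le_m le_x); rewrite ltnn.
Qed.

Lemma finitely_Jacobson_malg : finitely_Jacobson A.
Proof.
apply: (@finitely_Jacobson_of_fresh_subst _ subst_var (fun N => << ucm N >>) fresh_var).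
  exact: subst_varU.
by move=> s x xs; apply: subst_var_fresh => m; apply: fresh_var_notin.
Qed.

End FreshVariable.

Section LocalRingAtZero.
Variable K : countFieldType.
Local Notation F := {fraction {poly K}}.
Local Notation "p %:F" := (@FracField.tofrac _ p).

Definition regular_at0 (y : F) : Prop :=
  exists p q : {poly K}, q.[0] != 0 /\ y = p%:F / q%:F.

Lemma tofrac_neq0 (q : {poly K}) : q.[0] != 0 -> q%:F != 0.
Proof. by move=> q0; rewrite tofrac_eq0; apply: contraNneq q0 => ->; rewrite horner0. Qed.

Lemma regular_at0_poly p : regular_at0 p%:F.
Proof. by exists p, 1; rewrite hornerC oner_neq0 rmorph1 divr1. Qed.

Lemma regular_at0_0 : regular_at0 0.
Proof. by rewrite -(rmorph0 (@FracField.tofrac _)); apply: regular_at0_poly. Qed.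

Lemma regular_at0_1 : regular_at0 1.
Proof. by rewrite -(rmorph1 (@FracField.tofrac _)); apply: regular_at0_poly. Qed.

Lemma regular_at0_inv (q : {poly K}) : q.[0] != 0 -> regular_at0 q%:F^-1.
Proof. by move=> q0; exists 1, q; rewrite rmorph1 div1r. Qed.

Lemma regular_at0D y z : regular_at0 y -> regular_at0 z -> regular_at0 (y + z).
Proof.
move=> [p1 [q1 [q10 ->]]] [p2 [q2 [q20 ->]]].
exists (p1 * q2 + p2 * q1), (q1 * q2); rewrite hornerM mulf_neq0 //; split=> //.
by rewrite !rmorphD !rmorphM addf_div ?tofrac_neq0.
Qed.

Lemma regular_at0M y z : regular_at0 y -> regular_at0 z -> regular_at0 (y * z).
Proof.
move=> [p1 [q1 [q10 ->]]] [p2 [q2 [q20 ->]]].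
exists (p1 * p2), (q1 * q2); rewrite hornerM mulf_neq0 //; split=> //.
by rewrite !rmorphM mulf_div.
Qed.

Lemma regular_at0X y n : regular_at0 y -> regular_at0 (y ^+ n).
Proof.
move=> ry; elim: n => [|n IH]; first by rewrite expr0; apply: regular_at0_1.
by rewrite exprS; apply: regular_at0M.
Qed.

Lemma not_Jacobson_of_onto_regular_at0 (R : comNzRingType) (phi : {rmorphism R -> F}) a :
    phi a = 'X%:F -> (forall x, regular_at0 (phi x)) ->
    (forall y, regular_at0 y -> exists x, phi x = y) ->
  not_Jacobson R.
Proof.
move=> phia reg onto; have idI := is_ideal_kernel phi.
exists (fun x => phi x = 0); split=> //; exists a; split.
  apply/(JacP _ idI) => b; have [p [q [q0 phib]]] := reg b.
  have w0 : (q - 'X * p).[0] != 0 by rewrite hornerD hornerN hornerM hornerX mul0r subr0.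
  have [c phic] : exists c, phi c = q%:F / (q - 'X * p)%:F.
    by apply: onto; exists q, (q - 'X * p).
  have E : 1 - 'X%:F * (p%:F / q%:F) = (q - 'X * p)%:F / q%:F.
    by rewrite rmorphB rmorphM mulrBl divff ?tofrac_neq0 // mulrA.
  exists c; rewrite !(rmorphB, rmorphM, rmorph1) phic phia phib E mulf_div.
  by rewrite [X in _ / X]mulrC divff ?subrr // mulf_neq0 ?tofrac_neq0.
move/(NilP _ idI) => [n]; rewrite rmorphXn phia => /eqP.
by rewrite expf_eq0 tofrac_eq0 polyX_eq0 andbF.
Qed.

(* X, then the inverses of the polynomials w with w(0) <> 0, enumerated through
   [pickle]; indices that do not code such a w are sent to 0. *)
Definition loc_gen (k : nat) : F :=
  if k is k'.+1 then
    if choice.unpickle k' is Some w then (if w.[0] != 0 then w%:F^-1 else 0) else 0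
  else 'X%:F.

Lemma regular_at0_loc_gen k : regular_at0 (loc_gen k).
Proof.
case: k => [|k] /=; first exact: regular_at0_poly.
case: (choice.unpickle k) => [w|]; last exact: regular_at0_0.
by case: ifP => [w0|_]; [apply: regular_at0_inv | apply: regular_at0_0].
Qed.

Lemma loc_gen_pickle (w : {poly K}) :
  w.[0] != 0 -> loc_gen (choice.pickle w).+1 = w%:F^-1.
Proof. by move=> w0; rewrite /= choice.pickleK w0. Qed.

Local Notation A := {malg K[cmonom nat]}.

Definition tofrac_polyC : {rmorphism K -> F} := @FracField.tofrac _ \o polyC.

Definition loc_eval : A -> F := @peval nat K F tofrac_polyC loc_gen.

HB.instance Definition _ := GRing.RMorphism.on loc_eval.

Lemma regular_at0_loc_eval x : regular_at0 (loc_eval x).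
Proof.
rewrite /loc_eval /peval mmapE.
apply: big_ind; [exact: regular_at0_0 | exact: regular_at0D |].
move=> m _; apply: regular_at0M; first exact: regular_at0_poly.
apply: big_ind; [exact: regular_at0_1 | exact: regular_at0M |].
by move=> i _; apply/regular_at0X/regular_at0_loc_gen.
Qed.

Lemma loc_evalU k : loc_eval << ucm k >> = loc_gen k.
Proof. exact: pevalU. Qed.

Lemma loc_eval_horner p : loc_eval (map_poly malgC p).[<< ucm 0 >>] = p%:F.
Proof.
rewrite -horner_map /= loc_evalU -map_poly_comp (eq_map_poly (pevalC _ _)).
by rewrite map_poly_comp horner_map -[_.['X]]/(p \Po 'X) comp_polyXr.
Qed.

Lemma loc_eval_onto y : regular_at0 y -> exists x, loc_eval x = y.
Proof.
move=> [p [q [q0 ->]]].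
exists ((map_poly malgC p).[<< ucm 0 >>] * << ucm (choice.pickle q).+1 >>).
by rewrite rmorphM /= loc_eval_horner loc_evalU loc_gen_pickle.
Qed.

Lemma not_Jacobson_malg : not_Jacobson A.
Proof.
apply: (@not_Jacobson_of_onto_regular_at0 _ loc_eval << ucm 0 >>).
- exact: loc_evalU.
- exact: regular_at0_loc_eval.
- exact: loc_eval_onto.
Qed.

End LocalRingAtZero.

Theorem mainTheorem11 : finitely_Jacobson QX /\ not_Jacobson QX.
Proof. by split; [exact: finitely_Jacobson_malg | exact: not_Jacobson_malg]. Qed.
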